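(* For every integer $s\geq 0$, as formal power series in $t$, $$\sum_{n=0}^{\infty} L_{n,s}\,\frac{t^n}{n!} \;=\; \frac{e^{-1+\sqrt{1-2t}}}{\sqrt{1-2t}}\cdot\frac{\bigl(1-\sqrt{1-2t}\bigr)^s}{s!}.$$
   Context: A linear chord diagram with $n$ chords is a partition of $[2n]=\{1,2,\dots,2n\}$ into $n$ blocks of size two, called chords (equivalently, a perfect matching of $[2n]$). For a chord $\{a,b\}$ with $a<b$, its length is $b-a$. A short chord is a chord of length one, i.e. a chord of the form $\{i,i+1\}$. For $n\ge 0$ and $0\le s\le n$, $L_{n,s}$ denotes the number of linear chord diagrams with $n$ chords having exactly $s$ short chords (so $L_{0,0}=1$), and $L_{n,s}=0$ for $s>n$. *)

From HB Require Import structures.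
From mathcomp Require Import all_boot all_order all_algebra.
Set Implicit Arguments. Unset Strict Implicit. Unset Printing Implicit Defensive.
Import Order.TTheory GRing.Theory Num.Theory.

(* A linear chord diagram with n chords = perfect matching of {0,..,2n-1}
   (we use 0-based points, which does not affect lengths), encoded as a
   fixed-point-free involution f : 'I_(2n) -> 'I_(2n) (f x = partner of x). *)
Definition is_chord_diagram (n : nat) (f : {ffun 'I_(n.*2) -> 'I_(n.*2)}) : bool :=
  [forall x, (f (f x) == x) && (f x != x)].

Definition short_chords (n : nat) (f : {ffun 'I_(n.*2) -> 'I_(n.*2)}) : nat :=
  #|[set x : 'I_(n.*2) | val (f x) == (val x).+1]|.

Definition L (n s : nat) : nat :=
  #|[set f : {ffun 'I_(n.*2) -> 'I_(n.*2)} |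
       is_chord_diagram f & short_chords f == s]|.

Local Open Scope ring_scope.

Definition fps := nat -> rat.

Definition fmul (f g : fps) : fps :=
  fun n => \sum_(i < n.+1) f i * g (n - i)%N.
Definition fadd (f g : fps) : fps := fun n => f n + g n.
Definition fscale (c : rat) (f : fps) : fps := fun n => c * f n.
Definition fconst (c : rat) : fps := fun n => if n == 0%N then c else 0.
Definition fX : fps := fun n => if n == 1%N then 1 else 0.
Definition fpow (f : fps) (k : nat) : fps := iter k (fmul f) (fconst 1).

(* composition  sum_k a_k h^k  of the power series with coefficients a
   with a series h having zero constant term (only k <= n contribute to
   the coefficient of t^n). *)
Definition fcomp (a : nat -> rat) (h : fps) : fps :=
  fun n => \sum_(k < n.+1) a k * fpow h k n.

Definition gbinom (x : rat) (k : nat) : rat :=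
  (\prod_(i < k) (x - i%:R)) / (k`!)%:R.

Definition fexp (h : fps) : fps := fcomp (fun k => ((k`!)%:R)^-1) h.

Definition fsqrt1p (h : fps) : fps := fcomp (gbinom (1 / 2%:R)) h.

(* multiplicative inverse of a series f with f_0 <> 0:
   f^{-1} = f_0^{-1} * sum_k (-1)^k (f/f_0 - 1)^k *)
Definition finv (f : fps) : fps :=
  fscale (f 0%N)^-1
    (fcomp (fun k => (-1) ^+ k) (fadd (fscale (f 0%N)^-1 f) (fconst (-1)))).

Definition sqrt1m2t : fps := fsqrt1p (fscale (-2%:R) fX).

Definition rhs (s : nat) : fps :=
  fmul (fmul (fexp (fadd (fconst (-1)) sqrt1m2t)) (finv sqrt1m2t))
       (fscale ((s`!)%:R)^-1 (fpow (fadd (fconst 1) (fscale (-1) sqrt1m2t)) s)).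

Definition egfL (s : nat) : fps := fun n => (L n s)%:R / (n`!)%:R.

From Pilot Require Import Defs.
From HB Require Import structures.
From mathcomp Require Import all_boot all_order all_algebra.
From mathcomp Require Import boolp zify ring.
Set Implicit Arguments. Unset Strict Implicit. Unset Printing Implicit Defensive.

(* Both sides of the identity, as families of series indexed by s, satisfy
     (n+1) c_s(n+1) + s c_s(n) = c_(s-1)(n) + (s+1) c_(s+1)(n) + 2n c_s(n)
   with c_s(0) = [s = 0], which determines them (chord_rec_unique).

   For the left-hand side this is L_rec: deleting the chord through the last
   point of a diagram on 2n+2 points is a bijection onto pairs (diagram g on
   2n points, position p of the deleted partner).  The deleted chord is short
   iff p is the last position, and reinserting it splits the short chord
   {p-1, p} of g if there is one; summing over p gives the recursion.

   For the right-hand side we make nat -> rat a commutative ring (Cauchy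
   product, associativity checked on truncations to polynomials) with a
   derivation fderiv.  From its binomial coefficients, S = sqrt(1-2t) solves
   (1-2t) S' = -S, whence S^2 = 1-2t and S' = -1/S; the chain rule for exp then
   shows that A_s = exp(S-1)/S (1-S)^s/s! solves
   (1-2t) A_s' + s A_s = A_(s-1) + (s+1) A_(s+1), whose t^n coefficient is the
   recursion above. *)

(* Chord diagrams on an arbitrary number k of points, as fixed-point-free
   involutions of 'I_k; Defs only considers k = n.*2. *)
Definition chord_diagram k (f : {ffun 'I_k -> 'I_k}) : bool :=
  [forall x, (f (f x) == x) && (f x != x)].

Definition nshort k (f : {ffun 'I_k -> 'I_k}) : nat :=
  \sum_(x : 'I_k) (val (f x) == x.+1 :> nat).

Definition ndiag k s : nat :=
  \sum_(f : {ffun 'I_k -> 'I_k}) (chord_diagram f && (nshort f == s)).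

Lemma widen_lift k (i : 'I_k) : widen_ord (leqnSn k) i = lift ord_max i.
Proof. by apply: val_inj => /=; rewrite /bump leqNgt ltn_ord. Qed.

Lemma bump_short (p y x : nat) :
  (bump p y == (bump p x).+1) = (y == x.+1) && (x.+1 != p).
Proof.
rewrite /bump; case: leqP => h1; case: leqP => h2;
  case: (y =P x.+1) => e1; case: (x.+1 =P p) => e2 /=;
  first [apply/eqP; lia | apply/negbTE/eqP; lia].
Qed.

Lemma indicator_shift y b r s : y + b = r -> b <= 1 ->
  (y == s) + b * (r == s) = b * (r == s.+1) + (r == s).
Proof.
move=> <-; case: b => [|[|//]] _; first by rewrite !addn0 mul0n add0n.
by rewrite !mul1n addn1 eqSS addnC.
Qed.

Section InsertChord.
Variable m : nat.
Implicit Types (g : {ffun 'I_m -> 'I_m}) (p : 'I_m.+1).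

(* Insert a chord joining the new last point m+1 to a new point at position p,
   shifting the points of g at positions >= p by one. *)
Definition insert_chord g p : {ffun 'I_m.+2 -> 'I_m.+2} :=
  [ffun x => match unlift ord_max x with
             | None => lift ord_max p
             | Some y => match unlift p y with
                         | None => ord_max
                         | Some j => lift ord_max (lift p (g j))
                         end
             end].

Lemma insert_chord_last g p : insert_chord g p ord_max = lift ord_max p.
Proof. by rewrite ffunE unlift_none. Qed.

Lemma insert_chord_partner g p : insert_chord g p (lift ord_max p) = ord_max.
Proof. by rewrite ffunE liftK unlift_none. Qed.

Lemma insert_chord_old g p j :
  insert_chord g p (lift ord_max (lift p j)) = lift ord_max (lift p (g j)).
Proof. by rewrite ffunE !liftK. Qed.

Lemma chord_diagram_insert g p : chord_diagram g -> chord_diagram (insert_chord g p).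
Proof.
move/forallP=> Hg; apply/forallP => x.
case: (unliftP ord_max x) => [y ->|->]; last first.
  by rewrite insert_chord_last insert_chord_partner eqxx eq_sym neq_lift.
case: (unliftP p y) => [j ->|->].
  have /andP[/eqP gg gj] := Hg j.
  by rewrite !insert_chord_old gg eqxx /= !(inj_eq (@lift_inj _ _)).
by rewrite insert_chord_partner insert_chord_last eqxx neq_lift.
Qed.

(* The inverse construction: read off the partner of the last point and
   delete the chord through it. *)
Definition partner_last (f : {ffun 'I_m.+2 -> 'I_m.+2}) : 'I_m.+1 :=
  odflt ord0 (unlift ord_max (f ord_max)).

Definition remove_chord (f : {ffun 'I_m.+2 -> 'I_m.+2}) : {ffun 'I_m -> 'I_m} :=
  [ffun j => odflt j (obind (unlift (partner_last f))
                 (unlift ord_max (f (lift ord_max (lift (partner_last f) j)))))].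

Lemma partner_lastK g p : partner_last (insert_chord g p) = p.
Proof. by rewrite /partner_last insert_chord_last liftK. Qed.

Lemma remove_chordK g p : remove_chord (insert_chord g p) = g.
Proof.
apply/ffunP => j.
by rewrite ffunE partner_lastK insert_chord_old liftK /= liftK.
Qed.

Lemma insert_remove_chord f : chord_diagram f ->
  insert_chord (remove_chord f) (partner_last f) = f /\ chord_diagram (remove_chord f).
Proof.
move/forallP=> Hf.
have ff x : f (f x) = x by have /andP[/eqP] := Hf x.
have fn x : f x != x by have /andP[] := Hf x.
have finj : injective f by apply: (can_inj ff).
set p := partner_last f.
have f_last : f ord_max = lift ord_max p.
  rewrite /p /partner_last; case: (unliftP ord_max (f ord_max)) => [y ->|e] //=.
  by move: (fn ord_max); rewrite e eqxx.
have f_partner : f (lift ord_max p) = ord_max by rewrite -f_last ff.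
have f_old j : f (lift ord_max (lift p j)) = lift ord_max (lift p (remove_chord f j)).
  rewrite ffunE -/p.
  case: (unliftP ord_max (f (lift ord_max (lift p j)))) => [y ey|ey].
    rewrite ey /=; case: (unliftP p y) => [k ->|ey2] //=.
    move: ey; rewrite ey2 -f_last => /finj /eqP.
    by rewrite eq_sym (negbTE (neq_lift _ _)).
  have := finj _ _ (etrans ey (esym f_partner)) => /(@lift_inj _ ord_max) /eqP.
  by rewrite eq_sym (negbTE (neq_lift _ _)).
split.
  apply/ffunP => x.
  case: (unliftP ord_max x) => [y ->|->]; last by rewrite insert_chord_last f_last.
  case: (unliftP p y) => [j ->|->]; last by rewrite insert_chord_partner f_partner.
  by rewrite insert_chord_old f_old.
apply/forallP => j; apply/andP; split.
  apply/eqP; apply: (@lift_inj _ p); apply: (@lift_inj _ ord_max).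
  by rewrite -!f_old ff.
by apply/eqP => e; move: (fn (lift ord_max (lift p j))); rewrite f_old e eqxx.
Qed.

(* Number (0 or 1) of short chords {p-1, p} of g that are split apart by
   inserting a point at position p. *)
Definition broken g p : nat :=
  \sum_(j : 'I_m) ((val (g j) == j.+1) && (j.+1 == p :> nat)).

Lemma nshort_insert g p :
  nshort (insert_chord g p) + broken g p = (p == ord_max) + nshort g.
Proof.
rewrite /nshort big_ord_recr /=.
under eq_bigr => i _ do rewrite widen_lift.
rewrite (bigD1_ord p) //= insert_chord_last insert_chord_partner.
under eq_bigr => i _ do rewrite insert_chord_old lift_max /= bump_short.
rewrite lift_max (@ltn_eqF p m.+2 (ltnW (ltn_ord p))) addn0.
have -> : ((ord_max : 'I_m.+2) == p.+1 :> nat) = (p == ord_max).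
  by rewrite /= eqSS eq_sym.
rewrite -addnA /broken -big_split /=; congr (_ + _); apply: eq_bigr => i _.
by case: (g i == i.+1 :> nat); case: (i.+1 == p :> nat).
Qed.

Lemma broken_last g : broken g ord_max = 0.
Proof.
rewrite /broken big1 // => j _; apply/eqP; rewrite eqb0.
apply/negP => /andP[/eqP gj /eqP jp].
by have := ltn_ord (g j); rewrite gj /= jp ltnn.
Qed.

Lemma broken_le1 g p : broken g p <= 1.
Proof.
rewrite /broken; case: p => [[|k] Hk] /=; first by rewrite big1 // => j _; rewrite andbF.
have Hk' : k < m by [].
rewrite (bigD1 (Ordinal Hk')) //= eqxx andbT big1 ?addn0; first by case: (_ == _).
by move=> j /eqP jk; rewrite eqSS andbC; case: eqP => // e; case: jk; apply: val_inj.
Qed.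

Lemma sum_broken g : \sum_(q : 'I_m) broken g (lift ord_max q) = nshort g.
Proof.
rewrite /broken exchange_big /nshort; apply: eq_bigr => j _.
have [short_j|] := boolP (val (g j) == j.+1); last first.
  by move=> /negbTE nj; rewrite big1 // => q _; rewrite nj.
have Hq : j.+1 < m by rewrite -(eqP short_j) ltn_ord.
under eq_bigr => q _ do rewrite lift_max.
rewrite (bigD1 (Ordinal Hq)) //= eqxx big1 ?addn0 // => q /eqP qj.
by apply/eqP; rewrite eqb0; apply/eqP => e; apply: qj; apply: val_inj.
Qed.

(* Distribution of the number of short chords over the m+1 insertions into a
   fixed diagram g with r short chords: one insertion gives r+1, and summing
   the relations of nshort_insert over the others yields the identity below. *)
Lemma count_insertions g s :
  \sum_(p : 'I_m.+1) (nshort (insert_chord g p) == s) + s * (nshort g == s) =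
  ((nshort g).+1 == s) + nshort g * (nshort g == s.+1) + m * (nshort g == s).
Proof.
set r := nshort g.
have at_last : nshort (insert_chord g ord_max) = r.+1.
  by have := nshort_insert g ord_max; rewrite broken_last eqxx addn0 add1n.
have elsewhere (q : 'I_m) :
    (nshort (insert_chord g (lift ord_max q)) == s) + broken g (lift ord_max q) * (r == s)
    = broken g (lift ord_max q) * (r == s.+1) + (r == s).
  apply: indicator_shift; last exact: broken_le1.
  by have := nshort_insert g (lift ord_max q); rewrite eq_sym (negbTE (neq_lift _ _)).
have sum_elsewhere :
    \sum_(q < m) ((nshort (insert_chord g (lift ord_max q)) == s)
                  + broken g (lift ord_max q) * (r == s))
    = \sum_(q < m) (broken g (lift ord_max q) * (r == s.+1) + (r == s)).
  by apply: eq_bigr => q _; exact: elsewhere.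
rewrite !big_split -!big_distrl /= sum_broken sum_nat_const card_ord in sum_elsewhere.
rewrite big_ord_recr /= at_last.
under eq_bigr => q _ do rewrite widen_lift.
have -> : s * (r == s) = r * (r == s) by case: eqP => [->|]; rewrite ?muln0.
move: sum_elsewhere; set X := \sum_(q < m) _; lia.
Qed.

(* Counting diagrams on m+2 points through the bijection
   f <-> (remove_chord f, partner_last f). *)
Lemma ndiag_insert s : ndiag m.+2 s =
  \sum_(g : {ffun 'I_m -> 'I_m})
     (chord_diagram g * \sum_(p : 'I_m.+1) (nshort (insert_chord g p) == s)).
Proof.
rewrite /ndiag.
transitivity (\sum_(f in [set f : {ffun 'I_m.+2 -> 'I_m.+2} | chord_diagram f])
                 ((nshort f == s) : nat)).
  by rewrite [RHS]big_mkcond /=; apply: eq_bigr => f _; rewrite inE; case: chord_diagram.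
have -> : [set f : {ffun 'I_m.+2 -> 'I_m.+2} | chord_diagram f] =
    (fun q => insert_chord q.1 q.2) @:
      [set q : {ffun 'I_m -> 'I_m} * 'I_m.+1 | chord_diagram q.1].
  apply/setP => f; rewrite inE; apply/idP/imsetP.
    move=> cf; have [e c] := insert_remove_chord cf.
    by exists (remove_chord f, partner_last f); rewrite ?inE // e.
  by case=> -[g p]; rewrite inE /= => cg ->; exact: chord_diagram_insert.
rewrite big_imset /=; last first.
  move=> [g p] [g' p'] _ _ /= e.
  have := congr1 remove_chord e; have := congr1 partner_last e.
  by rewrite !remove_chordK !partner_lastK => -> ->.
transitivity (\sum_(q : {ffun 'I_m -> 'I_m} * 'I_m.+1)
                (if chord_diagram q.1 then ((nshort (insert_chord q.1 q.2) == s) : nat) else 0)).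
  by rewrite big_mkcond; apply: eq_bigr => q _; rewrite inE.
rewrite -(pair_big xpredT xpredT (fun g p =>
  if chord_diagram g then ((nshort (insert_chord g p) == s) : nat) else 0)) /=.
apply: eq_bigr => g _; case: (chord_diagram g); rewrite ?mul1n ?mul0n //.
by rewrite big1.
Qed.

(* Summing count_insertions over all diagrams g on m points. *)
Lemma ndiag_rec s : ndiag m.+2 s + s * ndiag m s =
  \sum_(g : {ffun 'I_m -> 'I_m}) (chord_diagram g && ((nshort g).+1 == s))
  + s.+1 * ndiag m s.+1 + m * ndiag m s.
Proof.
rewrite ndiag_insert /ndiag !big_distrr -!big_split /=; apply: eq_bigr => g _.
case: (chord_diagram g) => /=; last by rewrite !muln0 mul0n.
rewrite mul1n count_insertions; congr (_ + _ + _).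
by case: eqP => [->|]; rewrite ?muln0.
Qed.

End InsertChord.

Lemma card_set_sum (T : finType) (P : pred T) : #|[set x | P x]| = \sum_x (P x : nat).
Proof.
rewrite -sum1_card big_mkcond /=; apply: eq_bigr => x _.
by rewrite inE; case: (P x).
Qed.

Lemma L_ndiag n s : L n s = ndiag n.*2 s.
Proof.
rewrite /L card_set_sum /ndiag; apply: eq_bigr => f _.
by rewrite /short_chords card_set_sum.
Qed.

Lemma L0 s : L 0 s = (s == 0%N).
Proof.
rewrite L_ndiag /ndiag (eq_bigr (fun _ => (s == 0%N) : nat)).
  by rewrite sum_nat_const card_ffun !card_ord expn0 mul1n.
move=> f _; have -> : chord_diagram f by apply/forallP => -[].
by rewrite /= /nshort big_ord0 eq_sym.
Qed.

Lemma L_rec n s : (L n.+1 s + s * L n s =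
  (if s is t.+1 then L n t else 0) + s.+1 * L n s.+1 + n.*2 * L n s)%N.
Proof.
rewrite !L_ndiag doubleS ndiag_rec; congr (_ + _ + _)%N.
case: s => [|t]; first by rewrite big1 // => g _; rewrite andbF.
by rewrite L_ndiag /ndiag; apply: eq_bigr => g _; rewrite eqSS.
Qed.

Import GRing.Theory Num.Theory.
Local Open Scope ring_scope.

HB.instance Definition _ := gen_eqMixin fps.
HB.instance Definition _ := gen_choiceMixin fps.

Definition fzero : fps := fun _ => 0.
Definition fopp (f : fps) : fps := fun n => - f n.

Lemma faddA : associative fadd.
Proof. by move=> f g h; apply/funext => n; exact: addrA. Qed.
Lemma faddC : commutative fadd.
Proof. by move=> f g; apply/funext => n; exact: addrC. Qed.
Lemma fadd0 : left_id fzero fadd.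
Proof. by move=> f; apply/funext => n; exact: add0r. Qed.
Lemma faddN : left_inverse fzero fopp fadd.
Proof. by move=> f; apply/funext => n; exact: addNr. Qed.

HB.instance Definition _ := GRing.isZmodule.Build fps faddA faddC fadd0 faddN.

(* The coefficients of index <= n of a product only depend on the
   coefficients of index <= n of the factors: compare with polynomials. *)
Definition trunc (N : nat) (f : fps) : {poly rat} := \poly_(i < N) f i.

Lemma fmul_polyE (f g : fps) n (p q : {poly rat}) :
  (forall k, (k <= n)%N -> p`_k = f k) -> (forall k, (k <= n)%N -> q`_k = g k) ->
  fmul f g n = (p * q)`_n.
Proof.
move=> Hp Hq; rewrite coefM /fmul; apply: eq_bigr => i _.
by rewrite Hp ?Hq ?leq_subr // -ltnS.
Qed.

Lemma coef_trunc N (f : fps) k : (k < N)%N -> (trunc N f)`_k = f k.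
Proof. by move=> kN; rewrite coef_poly kN. Qed.

Lemma fmul_trunc n (f g : fps) k : (k <= n)%N ->
  fmul f g k = (trunc n.+1 f * trunc n.+1 g)`_k.
Proof. by move=> kn; apply: fmul_polyE => i ik; rewrite coef_trunc // ltnS (leq_trans ik). Qed.

Lemma fmulA : associative fmul.
Proof.
move=> f g h; apply/funext => n; set T := trunc n.+1.
rewrite (@fmul_polyE _ _ _ (T f) (T g * T h)) => [|k kn|k kn]; last 2 first.
- by rewrite coef_trunc.
- by rewrite -fmul_trunc.
rewrite (@fmul_polyE _ _ _ (T f * T g) (T h)) ?mulrA // => k kn.
- by rewrite -fmul_trunc.
- by rewrite coef_trunc.
Qed.

Lemma fmulC : commutative fmul.
Proof. by move=> f g; apply/funext => n; rewrite !(fmul_trunc _ _ (leqnn n)) mulrC. Qed.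

Lemma fconstM_coef c (f : fps) n : fmul (fconst c) f n = c * f n.
Proof.
rewrite /fmul big_ord_recl subn0 big1 ?addr0 // => i _.
by rewrite /fconst /= mul0r.
Qed.

Lemma fmul1 : left_id (fconst 1) fmul.
Proof. by move=> f; apply/funext => n; rewrite fconstM_coef mul1r. Qed.

Lemma fmulDl : left_distributive fmul fadd.
Proof.
move=> f g h; apply/funext => n.
by rewrite /fmul /fadd -big_split; apply: eq_bigr => i _; exact: mulrDl.
Qed.

Lemma fone_neq0 : fconst 1 != 0 :> fps.
Proof. by apply/eqP => /(congr1 (fun f : fps => f 0%N)) /eqP; rewrite oner_eq0. Qed.

HB.instance Definition _ :=
  GRing.Zmodule_isComNzRing.Build fps fmulA fmulC fmul1 fmulDl fone_neq0.

Lemma fmulE (f g : fps) : fmul f g = f * g. Proof. by []. Qed.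
Lemma faddE (f g : fps) : fadd f g = f + g. Proof. by []. Qed.
Lemma mulE (f g : fps) n : (f * g) n = fmul f g n. Proof. by []. Qed.
Lemma addE (f g : fps) n : (f + g) n = f n + g n. Proof. by []. Qed.
Lemma oppE (f : fps) n : (- f) n = - f n. Proof. by []. Qed.
Lemma natmulE (f : fps) k n : (f *+ k) n = f n *+ k.
Proof. by elim: k => [|k IH]; rewrite ?mulr0n // !mulrS addE IH. Qed.
Lemma oneE n : (1 : fps) n = fconst 1 n. Proof. by []. Qed.
Lemma fpowE (f : fps) k : fpow f k = f ^+ k.
Proof. by elim: k => [|k IH] //; rewrite exprS -IH. Qed.

Lemma fconstM c (f : fps) n : (fconst c * f) n = c * f n.
Proof. exact: fconstM_coef. Qed.

Lemma fscaleE c (f : fps) : fscale c f = fconst c * f.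
Proof. by apply/funext => n; rewrite fconstM. Qed.

Lemma fconst_mul a b : fconst a * fconst b = fconst (a * b) :> fps.
Proof. by apply/funext => n; rewrite fconstM /fconst; case: (n == 0%N); rewrite ?mulr0. Qed.

Lemma fconstN a : fconst (- a) = - fconst a :> fps.
Proof. by apply/funext => n; rewrite oppE /fconst; case: (n == 0%N); rewrite ?oppr0. Qed.

Lemma fconstX c k : fconst c ^+ k = fconst (c ^+ k) :> fps.
Proof. by elim: k => [|k IH]; rewrite ?expr0 // !exprS IH fconst_mul. Qed.

Lemma fconst_nat k : k%:R = fconst k%:R :> fps.
Proof. by apply/funext => n; rewrite natmulE oneE /fconst; case: (n == 0%N); rewrite ?mul0rn. Qed.

Lemma coef0M (f g : fps) : (f * g) 0%N = f 0%N * g 0%N.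
Proof. by rewrite mulE /fmul big_ord_recl big_ord0 addr0. Qed.

Lemma coef0X (f : fps) k : (f ^+ k) 0%N = f 0%N ^+ k.
Proof. by elim: k => [|k IH]; rewrite ?expr0 // !exprS coef0M IH. Qed.

(* The formal derivative; it is a derivation, again by comparison with
   polynomials. *)
Definition fderiv (f : fps) : fps := fun n => f n.+1 *+ n.+1.

Lemma fderivM (f g : fps) : fderiv (f * g) = fderiv f * g + f * fderiv g.
Proof.
apply/funext => n.
have coef_trunc_deriv (h : fps) k :
    (k <= n)%N -> ((trunc n.+2 h)^`())`_k = fderiv h k.
  by move=> kn; rewrite coef_deriv coef_trunc // !ltnS.
rewrite /fderiv addE !mulE (fmul_trunc f g (leqnn n.+1)) -coef_deriv derivM coefD.
by congr (_ + _); symmetry; apply: fmul_polyE => k kn;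
  rewrite ?coef_trunc_deriv // coef_trunc // ltnS leqW.
Qed.

Lemma fderivD (f g : fps) : fderiv (f + g) = fderiv f + fderiv g.
Proof. by apply/funext => n; rewrite /fderiv !addE mulrnDl. Qed.

Lemma fderivN (f : fps) : fderiv (- f) = - fderiv f.
Proof. by apply/funext => n; rewrite /fderiv !oppE mulNrn. Qed.

Lemma fderivC c : fderiv (fconst c) = 0.
Proof. by apply/funext => n; rewrite /fderiv /fconst /= mul0rn. Qed.

Lemma fderivXn (f : fps) k : fderiv (f ^+ k.+1) = (f ^+ k * fderiv f) *+ k.+1.
Proof.
elim: k => [|k IH]; first by rewrite expr1 expr0 mul1r.
by rewrite exprS fderivM IH mulrnAr mulrA -exprS [fderiv f * _]mulrC -mulrS.
Qed.

(* Substitution of a series h with h_0 = 0: the k-th power of h starts at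
   degree k, so all sums over k may be truncated at any bound above n. *)
Lemma fpow_low (h : fps) k n : h 0%N = 0 -> (n < k)%N -> (h ^+ k) n = 0.
Proof.
move=> h0; elim: k n => [//|k IH] n nk.
rewrite exprS mulE /fmul big1 // => -[[|i] Hi] _ /=; first by rewrite h0 mul0r.
by rewrite IH ?mulr0 //; lia.
Qed.

Lemma fcompE a (h : fps) n : fcomp a h n = \sum_(k < n.+1) a k * (h ^+ k) n.
Proof. by apply: eq_bigr => k _; rewrite fpowE. Qed.

Lemma fcomp_widen a (h : fps) n N : h 0%N = 0 -> (n < N)%N ->
  fcomp a h n = \sum_(k < N) a k * (h ^+ k) n.
Proof.
move=> h0 nN; rewrite fcompE (big_ord_widen N (fun k => a k * (h ^+ k) n) nN).
rewrite big_mkcond /=; apply: eq_bigr => i _; case: ifP => // /negbT.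
by rewrite -leqNgt => ni; rewrite fpow_low ?mulr0.
Qed.

Lemma fcomp0 a (h : fps) : fcomp a h 0%N = a 0%N.
Proof. by rewrite fcompE big_ord_recl big_ord0 addr0 expr0 /= mulr1. Qed.

Lemma fcompM_coef a (h g : fps) n : h 0%N = 0 ->
  (fcomp a h * g) n = \sum_(k < n.+1) a k * (h ^+ k * g) n.
Proof.
move=> h0; rewrite mulE /fmul.
under eq_bigr => i _ do rewrite (fcomp_widen a h0 (ltn_ord i)) big_distrl.
rewrite exchange_big; apply: eq_bigr => k _; rewrite mulE /fmul big_distrr.
by apply: eq_bigr => i _; exact: (esym (mulrA _ _ _)).
Qed.

Lemma fderiv_comp a (h : fps) : h 0%N = 0 ->
  fderiv (fcomp a h) = fcomp (fun k => a k.+1 *+ k.+1) h * fderiv h.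
Proof.
move=> h0; apply/funext => n.
rewrite fcompM_coef // /fderiv (fcomp_widen a h0 (ltnSn n.+1)) -sumrMnl.
rewrite big_ord_recl expr0 /= mulr0 mul0rn add0r.
apply: eq_bigr => k _.
have coef_powS : (h ^+ k.+1) n.+1 *+ n.+1 = (h ^+ k * fderiv h) n *+ k.+1.
  by rewrite -[RHS]natmulE -fderivXn.
by rewrite (_ : bump 0 k = k.+1) // -mulrnAr coef_powS mulrnAr mulrnAl.
Qed.

(* Geometric series: (1 + g) * sum_k (-1)^k g^k = 1, by telescoping. *)
Lemma geometric_inv (g : fps) : g 0%N = 0 -> (1 + g) * fcomp (fun k => (-1) ^+ k) g = 1.
Proof.
move=> g0; apply/funext => n.
rewrite mulrDl mul1r addE [g * _]mulrC fcompM_coef // fcompE -big_split /=.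
pose u k := - ((-1) ^+ k * (g ^+ k) n).
transitivity (\sum_(0 <= k < n.+1) (u k.+1 - u k)).
  by rewrite big_mkord; apply: eq_bigr => k _; rewrite /u exprS exprSr; ring.
rewrite telescope_sumr // /u fpow_low // expr0.
by rewrite !mulr0 oppr0 sub0r opprK mul1r.
Qed.

Lemma finvK (f : fps) : f 0%N != 0 -> f * Defs.finv f = 1.
Proof.
move=> f0; set c := (f 0%N)^-1.
set g : fps := fadd (fscale c f) (fconst (-1)).
have g0 : g 0%N = 0 by rewrite /g /fadd /fscale /fconst /= mulVf.
have Ef : f = fconst (f 0%N) * (1 + g).
  rewrite /g faddE fscaleE fconstN addrCA subrr addr0.
  by rewrite mulrA fconst_mul /c mulfV // mul1r.
rewrite /Defs.finv fscaleE -/c -/g {1}Ef mulrCA -mulrA mulrA fconst_mul.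
by rewrite mulrC /c mulVf // mulr1 geometric_inv.
Qed.

Lemma gbinom0 x : gbinom x 0 = 1.
Proof. by rewrite /gbinom big_ord0 fact0 divr1. Qed.

Lemma natr_fact_neq0 k : (k`!)%:R != 0 :> rat.
Proof. by rewrite pnatr_eq0 -lt0n fact_gt0. Qed.

Lemma natr_succ_neq0 k : 1 + k%:R != 0 :> rat.
Proof. by rewrite addrC natr1 pnatr_eq0. Qed.

Lemma gbinomS x k : gbinom x k.+1 = gbinom x k * (x - k%:R) / k.+1%:R.
Proof.
rewrite /gbinom big_ord_recr /= factS natrM.
by field; rewrite natr_fact_neq0 natr_succ_neq0.
Qed.

Lemma coef_fXM (g : fps) n : (fX * g) n = if n is n'.+1 then g n' else 0.
Proof.
rewrite mulE (@fmul_polyE _ _ _ 'X (trunc n.+1 g)) => [|k _|k kn].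
- by rewrite coefXM; case: n => [|n] //=; rewrite coef_trunc.
- by rewrite coefX /fX; case: (k == 1%N).
- by rewrite coef_trunc.
Qed.

Lemma coef_fXn k n : (fX ^+ k) n = (n == k)%:R.
Proof.
elim: k n => [|k IH] n; first by rewrite expr0 oneE /fconst; case: (n == 0%N).
by rewrite exprS coef_fXM; case: n => [|n] //; rewrite IH eqSS.
Qed.

Local Notation Sq := sqrt1m2t.
Local Notation Sqinv := (Defs.finv sqrt1m2t).
Definition one_m2t : fps := 1 - 2%:R * fX.

Lemma sqrt1m2t_coef n : Sq n = gbinom (1 / 2%:R) n * (- 2%:R) ^+ n.
Proof.
rewrite /sqrt1m2t /fsqrt1p fcompE fscaleE.
under eq_bigr => k _ do rewrite exprMn fconstX fconstM coef_fXn.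
rewrite big_ord_recr /= eqxx mulr1 big1 ?add0r // => k _.
by rewrite eq_sym (ltn_eqF (ltn_ord k)) !mulr0.
Qed.

Lemma sqrt1m2t0 : Sq 0%N = 1.
Proof. by rewrite sqrt1m2t_coef gbinom0 expr0 mulr1. Qed.

Lemma coef_one_m2tM (g : fps) n :
  (one_m2t * g) n = g n - 2%:R * (if n is n'.+1 then g n' else 0).
Proof. by rewrite /one_m2t mulrBl mul1r addE oppE -mulrA fconst_nat fconstM coef_fXM. Qed.

Lemma one_m2t0 : one_m2t 0%N = 1.
Proof. by rewrite /one_m2t addE oppE coef0M /fX /= mulr0 subr0. Qed.

Lemma fderiv_one_m2t : fderiv one_m2t = - 2%:R.
Proof.
apply/funext => n; rewrite /fderiv oppE natmulE oneE.
have := coef_one_m2tM 1 n.+1; rewrite mulr1 => ->.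
case: n => [|n]; rewrite !oneE /fconst /=; first by rewrite mulr1n sub0r mulr1.
by rewrite mulr0 subr0 !mul0rn oppr0.
Qed.

Lemma sqrt1m2t_ode : one_m2t * fderiv Sq = - Sq.
Proof.
apply/funext => n; rewrite coef_one_m2tM oppE /fderiv.
case: n => [|k].
  by rewrite !sqrt1m2t_coef gbinomS gbinom0 expr1 expr0 mulr1n mulr0 subr0; field.
rewrite -[Sq k.+2 *+ _]mulr_natr -[Sq k.+1 *+ _]mulr_natr !sqrt1m2t_coef (gbinomS _ k.+1) !exprS.
field; by rewrite addrC -natrD addn2 pnatr_eq0.
Qed.

Lemma ode_unique (y : fps) : one_m2t * fderiv y = - (y *+ 2) -> y 0%N = 0 -> y = 0.
Proof.
move=> ode y0; apply/funext => n; elim: n => [//|n IH].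
have := congr1 (fun f : fps => f n) ode.
rewrite /= coef_one_m2tM oppE natmulE IH mul0rn oppr0 /fderiv.
case: n IH => [|n] IH /=; rewrite ?IH ?mul0rn ?mulr0 ?subr0 => /eqP;
  by rewrite mulrn_eq0 => /orP[//|/eqP].
Qed.

(* S^2 = 1 - 2t: the difference S^2 - (1 - 2t) solves the equation of
   ode_unique. *)
Lemma sqr_sqrt1m2t : Sq * Sq = one_m2t.
Proof.
apply/eqP; rewrite -subr_eq0; apply/eqP; apply: ode_unique.
  have -> : one_m2t * fderiv (Sq * Sq - one_m2t)
          = (Sq * (one_m2t * fderiv Sq)) *+ 2 - one_m2t * fderiv one_m2t.
    by rewrite fderivD fderivN fderivM; ring.
  by rewrite sqrt1m2t_ode fderiv_one_m2t; ring.
by rewrite addE oppE coef0M sqrt1m2t0 one_m2t0 mulr1 subrr.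
Qed.

Lemma sqrt1m2tK : Sq * Sqinv = 1.
Proof. by apply: finvK; rewrite sqrt1m2t0 oner_neq0. Qed.

Lemma finv_sqrt1m2t0 : Sqinv 0%N = 1.
Proof. by have := congr1 (fun f : fps => f 0%N) sqrt1m2tK; rewrite /= coef0M sqrt1m2t0 mul1r. Qed.

Lemma fderiv_sqrt1m2t : fderiv Sq = - Sqinv.
Proof.
transitivity (fderiv Sq * (Sq * Sqinv) * (Sq * Sqinv)); first by rewrite sqrt1m2tK !mulr1.
transitivity ((one_m2t * fderiv Sq) * Sqinv * Sqinv); first by rewrite -sqr_sqrt1m2t; ring.
rewrite sqrt1m2t_ode; transitivity (- (Sq * Sqinv) * Sqinv); first by ring.
by rewrite sqrt1m2tK mulN1r.
Qed.

Lemma fderiv_finv_sqrt1m2t : fderiv Sqinv = Sqinv * Sqinv * Sqinv.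
Proof.
have h : Sq * fderiv Sqinv = Sqinv * Sqinv.
  have := congr1 fderiv sqrt1m2tK; rewrite fderivM fderivC fderiv_sqrt1m2t => /eqP.
  by rewrite addrC addr_eq0 => /eqP ->; rewrite mulNr opprK.
transitivity (fderiv Sqinv * (Sq * Sqinv)); first by rewrite sqrt1m2tK mulr1.
by transitivity ((Sq * fderiv Sqinv) * Sqinv); [ring | rewrite h].
Qed.

Local Notation Ex := (fexp (fadd (fconst (-1)) sqrt1m2t)).

Lemma fexp_sqrt1m2t0 : Ex 0%N = 1.
Proof. by rewrite /fexp fcomp0 fact0 invr1. Qed.

Lemma fderiv_fexp_sqrt1m2t : fderiv Ex = - (Ex * Sqinv).
Proof.
have h0 : fadd (fconst (-1)) Sq 0%N = 0 by rewrite /fadd /fconst /= sqrt1m2t0 addNr.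
rewrite /fexp fderiv_comp //.
have -> : (fun k => (k.+1`!%:R)^-1 *+ k.+1) = (fun k => (k`!%:R)^-1 : rat).
  apply/funext => k; rewrite factS natrM -mulr_natr.
  by field; rewrite natr_fact_neq0 natr_succ_neq0.
rewrite faddE fderivD fderivC add0r fderiv_sqrt1m2t; ring.
Qed.

Definition invfact (k : nat) : fps := fconst (k`!%:R)^-1.
Definition A (s : nat) : fps := Ex * Sqinv * (invfact s * (1 - Sq) ^+ s).

Lemma rhsE s : rhs s = A s.
Proof.
have neg (f : fps) : fconst (-1) * f = - f by rewrite fconstN mulN1r.
by rewrite /rhs !fmulE !fscaleE fpowE !faddE neg.
Qed.

Lemma invfactS k : invfact k = invfact k.+1 *+ k.+1.
Proof.
rewrite -mulr_natr fconst_nat /invfact fconst_mul factS natrM.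
by congr fconst; field; rewrite natr_fact_neq0 natr_succ_neq0.
Qed.

Lemma invfact0 : invfact 0 = 1.
Proof. by rewrite /invfact fact0 invr1. Qed.

Lemma invfact1 : invfact 1 = 1.
Proof. by rewrite /invfact factS fact0 invr1. Qed.

(* Identities in the ring of series holding modulo the relation S * (1/S) = 1;
   `ring` cannot use this relation itself. *)
Lemma eq_mod_sqrt1m2tK (x y k : fps) : x - y = (Sq * Sqinv - 1) * k -> x = y.
Proof. by rewrite sqrt1m2tK subrr mul0r => /eqP; rewrite subr_eq0 => /eqP. Qed.

Lemma A_ode s : one_m2t * fderiv (A s) + A s *+ s =
  (if s is t.+1 then A t else 0) + A s.+1 *+ s.+1.
Proof.
case: s => [|t].
  rewrite /A !expr0 expr1 invfact0 invfact1 !mulr1 mul1r mulr0n addr0 add0r mulr1n.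
  rewrite fderivM fderiv_fexp_sqrt1m2t fderiv_finv_sqrt1m2t -sqr_sqrt1m2t.
  by apply: (eq_mod_sqrt1m2tK (k := - Ex * (Sq * Sqinv) + Ex * Sqinv * (Sq * Sqinv + 1))); ring.
rewrite /A !fderivM fderivC fderiv_fexp_sqrt1m2t fderiv_finv_sqrt1m2t fderivXn.
rewrite fderivD fderivN fderivC fderiv_sqrt1m2t.
rewrite [invfact t]invfactS [invfact t.+1]invfactS !exprSr -sqr_sqrt1m2t.
set Q := (1 - Sq) ^+ t; set C := invfact t.+2.
apply: (eq_mod_sqrt1m2tK (k := - Ex * (Sq * Sqinv) * (C *+ t.+2) * Q * (1 - Sq)
   + Ex * Sqinv * (C *+ t.+2) * Q * (1 - Sq) * (Sq * Sqinv + 1)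
   + Ex * (C *+ t.+2 *+ t.+1) * Q * (Sq * Sqinv))).
ring.
Qed.

Definition chord_rec (c : nat -> fps) : Prop :=
  forall s n, c s n.+1 *+ n.+1 + c s n *+ s =
    (if s is t.+1 then c t n else 0) + c s.+1 n *+ s.+1 + c s n *+ n.*2.

Lemma chord_rec_unique (c d : nat -> fps) : chord_rec c -> chord_rec d ->
  (forall s, c s 0%N = d s 0%N) -> forall s, c s = d s.
Proof.
move=> rec_c rec_d c0 s; apply/funext => n; elim: n s => [|n IH] s; first exact: c0.
have := rec_c s n; have := rec_d s n.
case: s => [|t] /=; rewrite !IH => <- /addIr; exact: pmulrnI.
Qed.

Lemma A_rec : chord_rec A.
Proof.
move=> s n; have := congr1 (fun f : fps => f n) (A_ode s).
rewrite /= !addE coef_one_m2tM !natmulE /fderiv.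
have -> : (if n is n'.+1 then A s n'.+1 *+ n'.+1 else 0) = A s n *+ n by case: n.
have -> : (if s is t.+1 then A t else 0) n = (if s is t.+1 then A t n else 0) by case: s.
by move=> <-; rewrite -muln2 mulrnA; ring.
Qed.

Lemma A_coef0 s : A s 0%N = (s == 0%N)%:R.
Proof.
rewrite /A !coef0M fexp_sqrt1m2t0 finv_sqrt1m2t0 mul1r coef0X addE oppE sqrt1m2t0.
rewrite /= /fconst /= subrr.
by case: s => [|t]; rewrite ?expr0 ?fact0 ?invr1 ?mulr1 // expr0n mulr0.
Qed.

(* Dividing L_rec by n! gives the recursion for the coefficients of egfL. *)
Lemma egfL_rec : chord_rec egfL.
Proof.
move=> s n.
apply: (mulIf (natr_fact_neq0 n)).
transitivity ((L n.+1 s + s * L n s)%N%:R : rat).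
  by rewrite /egfL factS natrD !natrM; field; rewrite natr_fact_neq0 natr_succ_neq0.
rewrite L_rec /egfL; case: s => [|t]; rewrite !natrD !natrM ?add0r;
  by field; rewrite natr_fact_neq0.
Qed.

Lemma egfL_coef0 s : egfL s 0%N = (s == 0%N)%:R.
Proof. by rewrite /egfL L0 fact0 divr1. Qed.

Theorem theorem2 : forall s : nat, egfL s = rhs s.
Proof.
move=> s; rewrite rhsE; move: s.
apply: chord_rec_unique; [exact: egfL_rec | exact: A_rec |].
by move=> s; rewrite egfL_coef0 A_coef0.
Qed.
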